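(* Let $G$ be an $r$-graph on $n$ vertices, let $L>r$ be an integer, and let $0\le k<r$ be the residue of $L$ modulo $r$. If $G$ is $C_L^{(r)}$-hom-free, then one can delete at most $2rL^{-1/r}n^r$ edges from $G$ so that the resulting $r$-graph $G'$ is $\mathscr C_k^{(r)}$-hom-free.
   Context: An $r$-graph is an $r$-uniform hypergraph. For $\ell>r$, the tight cycle $C_\ell^{(r)}$ has vertices $v_1,\dots,v_\ell$ and edges $\{v_i,\dots,v_{i+r-1}\}$, $1\le i\le\ell$ (indices mod $\ell$). A homomorphism $F\to G$ maps $V(F)\to V(G)$ sending each edge of $F$ onto an edge of $G$; $G$ is $F$-hom-free if none exists, and $\mathscr C_k^{(r)}$-hom-free if it is $C_\ell^{(r)}$-hom-free for all $\ell>r$ with $\ell\equiv k\pmod r$. *)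

From mathcomp Require Import all_boot.
From Stdlib Require Import Reals.
Set Implicit Arguments. Unset Strict Implicit. Unset Printing Implicit Defensive.

Definition is_rgraph (n r : nat) (E : {set {set 'I_n}}) : Prop :=
  forall e, e \in E -> #|e| = r.

(* A homomorphism from the tight cycle C_l^{(r)} (vertices v_0..v_{l-1},
   edges {v_i,...,v_{i+r-1}} indices mod l) into (the r-graph with edge set) E:
   a vertex map f (only its values on 0..l-1 matter) such that the image of
   every edge of the cycle is an edge of E. *)
Definition cycle_hom (n r l : nat) (E : {set {set 'I_n}}) (f : nat -> 'I_n) : Prop :=
  forall i, i < l -> [set f ((i + val j) %% l) | j : 'I_r] \in E.

Definition cycle_hom_free (n r l : nat) (E : {set {set 'I_n}}) : Prop :=
  ~ (exists f : nat -> 'I_n, cycle_hom r l E f).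

Definition cycle_class_hom_free (n r k : nat) (E : {set {set 'I_n}}) : Prop :=
  forall l, r < l -> l %% r = k %% r -> cycle_hom_free r l E.

(* Homomorphic tight cycles of length [l] are closed tight walks with [l]
   edges (vertex sequences in which every [r] consecutive vertices form an
   edge; [r-1] consecutive vertices of a walk form a state), and a closed walk
   can be lengthened by [r] by winding once around one of its edges.  Delete,
   as long as possible, all edges through an [(r-1)]-set whose positive
   codegree is below [D]; this costs fewer than [D] edges per [(r-1)]-set.
   Afterwards every state has at least [D ^ (r-1)] continuations by [r-1]
   vertices, so on a closed walk longer than [L] two states at distance a
   positive multiple of [r ^ 2] share a continuation; going out along it and
   back along its reversal (which has [(r-1) ^ 2] edges) short-cuts the walk
   without changing its length modulo [r].  Hence a closed walk of length [L]
   modulo [r] could be shortened to length at most [L] and then padded to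
   exactly [L], which is excluded.  The least [D] with
   [r ^ 2 n ^ (r-1) <= L D ^ (r-1)] gives the bound on the deleted edges. *)

From mathcomp Require Import all_boot zify.
From Stdlib Require Import Reals Lra.
(* [Reals] rebinds [_ ^ _] in [nat_scope]; restore the ssrnat notation. *)
Import ssrnat.

Set Implicit Arguments. Unset Strict Implicit. Unset Printing Implicit Defensive.

(* The cast types the window in ['I_n] rather than in the finType carrier, so
   that [size] terms coming from [tight] and from [seq] lemmas agree for [lia]. *)
Definition tight (n r : nat) (E : {set {set 'I_n}}) (s : seq 'I_n) : bool :=
  [forall p : 'I_(size s).+1,
     (p + r <= size s) ==> ([set:: take r (drop p s) : seq 'I_n] \in E)].

Definition walk (n r : nat) (E : {set {set 'I_n}}) (x y : seq 'I_n) (m : nat)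
    (w : seq 'I_n) : Prop :=
  [/\ tight r E w, size w = m + r.-1, take r.-1 w = x & drop m w = y].

Definition state_at (n r : nat) (w : seq 'I_n) (i : nat) : seq 'I_n :=
  take r.-1 (drop i w).

Lemma take_drop_cat_rot (T : Type) (e : seq T) p : p <= size e ->
  take (size e) (drop p (e ++ e)) = rot p e.
Proof.
move=> le_p; rewrite drop_cat; have [lt_p|ge_p] := ltnP p (size e).
- by rewrite take_cat size_drop ltnNge leq_subr /rot; congr (_ ++ take _ _); lia.
- have -> : p = size e by lia.
  by rewrite subnn drop0 take_size rot_size.
Qed.

Lemma set_take_drop (n : nat) (s : seq 'I_n) (x0 : 'I_n) i r : i + r <= size s ->
  [set:: take r (drop i s) : seq 'I_n] = [set nth x0 s (i + j) | j : 'I_r].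
Proof.
move=> le_ir; have size_w : size (take r (drop i s)) = r.
  by rewrite size_take_min size_drop; lia.
apply/setP => z; rewrite inE; apply/(nthP x0)/imsetP.
- case=> j; rewrite size_w => lt_jr <-.
  by exists (Ordinal lt_jr) => //=; rewrite nth_take // nth_drop.
- case=> [[j lt_jr]] _ ->; exists j; first by rewrite size_w.
  by rewrite nth_take // nth_drop.
Qed.

Section TightWalks.
Variables (n r : nat) (E : {set {set 'I_n}}).

Lemma tightP s :
  reflect (forall p, p + r <= size s -> [set:: take r (drop p s) : seq 'I_n] \in E)
    (tight r E s).
Proof.
apply: (iffP forallP) => [tight_s p le_pr | tight_s p]; last exact/implyP/tight_s.
have lt_p : p < (size s).+1 by lia.
exact: (implyP (tight_s (Ordinal lt_p))).
Qed.

Lemma tight_take k s : tight r E s -> tight r E (take k s).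
Proof.
move=> /tightP tight_s; apply/tightP => p; rewrite size_take_min => le_pr.
have le_pk : p <= k by lia.
rewrite -(subnK le_pk) -take_drop take_takel; last by lia.
by apply: tight_s; lia.
Qed.

Lemma tight_cons x s :
  tight r E (x :: s) = ((r <= (size s).+1) ==> ([set:: take r (x :: s)] \in E)) && tight r E s.
Proof.
apply/tightP/andP => [tight_xs | [/implyP edge0 /tightP tight_s] [|p] le_pr].
- split; first by apply/implyP => le_r; apply: (tight_xs 0).
  by apply/tightP => p le_pr; apply: (tight_xs p.+1); rewrite /= addSn ltnS.
- exact: edge0.
- by apply: tight_s; move: le_pr; rewrite /= addSn ltnS.
Qed.

Lemma tight_cat_self (e : seq 'I_n) : size e = r -> [set:: e] \in E -> tight r E (e ++ e).
Proof.
move=> size_e edge_e; apply/tightP => p; rewrite size_cat => le_pr.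
rewrite -size_e take_drop_cat_rot; last by lia.
suff -> : [set:: rot p e] = [set:: e] by [].
by apply/setP => z; rewrite !inE mem_rot.
Qed.

Hypothesis r_gt0 : 0 < r.

Lemma tight_drop k s : tight r E s -> tight r E (drop k s).
Proof.
move=> /tightP tight_s; apply/tightP => p; rewrite size_drop drop_drop => le_pr.
by apply: tight_s; lia.
Qed.

Lemma drop_cat_overlap (a b : seq 'I_n) m p : m <= p -> size a = m + r.-1 -> r.-1 <= size b ->
  drop m a = take r.-1 b -> drop p (a ++ drop r.-1 b) = drop (p - m) b.
Proof.
move=> le_mp size_a le_rb overlap.
rewrite -{1}(subnK le_mp) -drop_drop drop_cat.
have [lt_ma | le_am] := ltnP m (size a); first by rewrite overlap cat_take_drop.
have r1_eq0 : r.-1 = 0 by lia.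
have -> : m = size a by lia.
by rewrite r1_eq0 subnn !drop0.
Qed.

Lemma walk_cat x y z m m' a b :
  walk r E x y m a -> walk r E y z m' b -> walk r E x z (m + m') (a ++ drop r.-1 b).
Proof.
case=> /tightP tight_a size_a start_a end_a [/tightP tight_b size_b start_b end_b].
have overlap : drop m a = take r.-1 b by rewrite end_a start_b.
split.
- apply/tightP => p; rewrite size_cat size_drop => le_pr.
  have [le_pra | le_mp] : p + r <= size a \/ m <= p by lia.
  + rewrite drop_cat ifT; last by lia.
    rewrite takel_cat ?size_drop; [exact: tight_a | lia].
  + rewrite (drop_cat_overlap le_mp size_a) ?size_b //; last by lia.
    by apply: tight_b; lia.
- by rewrite size_cat size_drop; lia.
- by rewrite takel_cat ?start_a //; lia.
- by rewrite (drop_cat_overlap _ size_a) ?size_b ?addKn //; lia.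
Qed.

Lemma size_state_at (w : seq 'I_n) m i :
  size w = m + r.-1 -> i <= m -> size (state_at r w i) = r.-1.
Proof. by move=> size_w le_im; rewrite size_take_min size_drop size_w; lia. Qed.

Lemma walk_take x y m w i :
  walk r E x y m w -> i <= m -> walk r E x (state_at r w i) i (take (i + r.-1) w).
Proof.
case=> tight_w size_w start_w _ le_im; split.
- exact: tight_take.
- by rewrite size_take_min size_w; lia.
- by rewrite take_takel ?start_w //; lia.
- by rewrite /state_at take_drop addnC.
Qed.

Lemma walk_drop x y m w j :
  walk r E x y m w -> j <= m -> walk r E (state_at r w j) y (m - j) (drop j w).
Proof.
case=> tight_w size_w _ end_w le_jm; split => //.
- exact: tight_drop.
- by rewrite size_drop size_w; lia.
- by rewrite drop_drop subnK.
Qed.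

Lemma walk_first_edge x y m w : walk r E x y m w -> 0 < m -> [set:: take r w] \in E.
Proof.
case=> /tightP tight_w size_w _ _ m_gt0.
by have := tight_w 0; rewrite drop0; apply; rewrite size_w; lia.
Qed.

Lemma closed_walk_around_edge (e : seq 'I_n) : size e = r -> [set:: e] \in E ->
  walk r E (take r.-1 e) (take r.-1 e) r (take (r + r.-1) (e ++ e)).
Proof.
move=> size_e edge_e; split.
- exact/tight_take/tight_cat_self.
- by rewrite size_take_min size_cat size_e; lia.
- by rewrite take_takel ?takel_cat //; lia.
- by rewrite (addnC r) -take_drop drop_cat size_e ltnn subnn drop0.
Qed.

Lemma closed_walk_pad x l s :
  walk r E x x l s -> 0 < l -> exists s', walk r E x x (r + l) s'.
Proof.
move=> walk_s l_gt0; have edge_s := walk_first_edge walk_s l_gt0.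
case: (walk_s) => _ size_s start_s _.
have size_e : size (take r s) = r by rewrite size_take_min size_s; lia.
have := closed_walk_around_edge size_e edge_s.
rewrite take_takel ?start_s; last by lia.
by move/walk_cat/(_ walk_s); eexists; eassumption.
Qed.

Lemma closed_walk_padn x l s c :
  walk r E x x l s -> 0 < l -> exists s', walk r E x x (l + c * r) s'.
Proof.
move=> walk_s l_gt0; elim: c => [|c [s' walk_s']]; first by exists s; rewrite addn0.
have [s'' walk_s''] := closed_walk_pad walk_s' (ltn_addr _ l_gt0).
by exists s''; rewrite mulSn addnCA.
Qed.

Lemma walk_rev_edge (e : seq 'I_n) : size e = r -> [set:: e] \in E ->
  walk r E (drop 1 e) (take r.-1 e) r.-1 (take (r.-1 + r.-1) (drop 1 (e ++ e))).
Proof.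
move=> size_e edge_e; split.
- exact/tight_take/tight_drop/tight_cat_self.
- by rewrite size_take_min size_drop size_cat size_e; lia.
- rewrite take_takel ?leq_addr // drop_cat size_e.
  have [lt_1r | le_r1] := ltnP 1 r.
  + by rewrite takel_cat ?take_oversize // size_drop size_e; lia.
  + have r_eq1 : r = 1 by lia.
    by rewrite r_eq1 take0 drop_oversize // size_e r_eq1.
- rewrite -take_drop drop_drop.
  have -> : r.-1 + 1 = size e by rewrite size_e; lia.
  by rewrite drop_cat ltnn subnn drop0.
Qed.

(* An edge [e] traversed forwards in one step is traversed backwards in [r.-1]
   steps around the tight cycle on [e]. *)
Lemma walk_rev m x y w : walk r E x y m w -> exists w', walk r E y x (r.-1 * m) w'.
Proof.
elim: m x y w => [|m IHm] x y w walk_w.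
  case: (walk_w) => tight_w size_w start_w end_w; exists w; rewrite muln0; split => //.
  - by rewrite -end_w drop0 take_oversize // size_w.
  - by rewrite drop0 -start_w take_oversize // size_w.
have [w1 walk_w1] := IHm _ _ _ (walk_take walk_w (leqnSn m)).
have walk_last := walk_drop walk_w (leqnSn m); rewrite subSnn in walk_last.
case: (walk_last) => _ size_last start_last end_last.
have size_e : size (drop m w) = r by rewrite size_last; lia.
have edge_e := walk_first_edge walk_last (ltn0Sn 0).
rewrite take_oversize ?size_e // in edge_e.
have := walk_rev_edge size_e edge_e; rewrite end_last start_last.
by move/walk_cat/(_ walk_w1); rewrite -mulnS; eexists; eassumption.
Qed.

Lemma walk_of_tight_cat (y t : seq 'I_n) : size y = r.-1 -> size t = r.-1 ->
  tight r E (y ++ t) -> walk r E y t r.-1 (y ++ t).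
Proof.
move=> size_y size_t tight_yt; split => //.
- by rewrite size_cat size_y size_t.
- by rewrite takel_cat ?size_y // take_oversize ?size_y.
- by rewrite drop_cat size_y ltnn subnn drop0.
Qed.

(* Two positions [i <= j] of a closed walk whose states have a common tight
   continuation [t] can be joined: go from state [i] to [t], then back from
   [t] to state [j] along the reversed continuation. *)
Lemma closed_walk_shortcut x l s i j (t : seq 'I_n) :
  walk r E x x l s -> i <= j -> j <= l -> size t = r.-1 ->
  tight r E (state_at r s i ++ t) -> tight r E (state_at r s j ++ t) ->
  exists s', walk r E x x (i + r.-1 * r + (l - j)) s'.
Proof.
move=> walk_s le_ij le_jl size_t tight_i tight_j.
case: (walk_s) => _ size_s _ _.
have size_i := size_state_at size_s (leq_trans le_ij le_jl).
have size_j := size_state_at size_s le_jl.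
have walk_it := walk_of_tight_cat size_i size_t tight_i.
have [w walk_tj] := walk_rev (walk_of_tight_cat size_j size_t tight_j).
have walk_ij := walk_cat walk_it walk_tj.
have := walk_cat (walk_cat (walk_take walk_s (leq_trans le_ij le_jl)) walk_ij)
  (walk_drop walk_s le_jl).
by rewrite -mulnS prednK //; eexists; eassumption.
Qed.

Lemma closed_walk_of_cycle_hom l f : 0 < l -> cycle_hom r l E f ->
  exists s, walk r E (take r.-1 s) (take r.-1 s) l s.
Proof.
move=> l_gt0 hom_f; pose g i := f (i %% l).
exists [seq g i | i <- iota 0 (l + r.-1)]; split => //.
- apply/tightP => p; rewrite size_map size_iota => le_pr.
  rewrite (set_take_drop (f 0)) ?size_map ?size_iota //.
  suff -> : [set nth (f 0) [seq g i | i <- iota 0 (l + r.-1)] (p + j) | j : 'I_r] =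
            [set f ((p + val j) %% l) | j : 'I_r] by apply: hom_f; lia.
  apply: eq_imset => j; have lt_jr := ltn_ord j.
  by rewrite (nth_map 0) ?nth_iota ?size_iota ?add0n //; lia.
- by rewrite size_map size_iota.
- rewrite -map_drop -map_take drop_iota take_iota add0n.
  have -> : minn r.-1 (l + r.-1) = r.-1 by lia.
  rewrite addKn -{1}(addn0 l) iotaDl -map_comp.
  by apply: eq_map => i; rewrite /g /= modnDl.
Qed.

Lemma cycle_hom_of_closed_walk (v0 : 'I_n) x L s : r <= L ->
  walk r E x x L s -> cycle_hom r L E (nth v0 s).
Proof.
move=> le_rL [/tightP tight_s size_s start_s end_s] i lt_iL.
have periodic k : k < L + r.-1 -> nth v0 s (k %% L) = nth v0 s k.
  have [lt_kL | le_Lk] := ltnP k L; first by rewrite modn_small.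
  move=> lt_k; rewrite -(subnKC le_Lk) modnDl modn_small; last by lia.
  by rewrite -nth_drop end_s -start_s nth_take //; lia.
have le_ir : i + r <= size s by rewrite size_s; lia.
suff -> : [set nth v0 s ((i + val j) %% L) | j : 'I_r] = [set:: take r (drop i s) : seq 'I_n].
  exact: tight_s.
rewrite (set_take_drop v0 le_ir); apply: eq_imset => -[j lt_jr] /=.
by rewrite periodic //; lia.
Qed.

End TightWalks.

Lemma walk_subset (n r : nat) (E1 E2 : {set {set 'I_n}}) x y m w :
  E1 \subset E2 -> walk r E1 x y m w -> walk r E2 x y m w.
Proof.
move=> /subsetP sub_E [/tightP tight_w size_w start_w end_w]; split => //.
by apply/tightP => p le_pr; apply/sub_E/tight_w.
Qed.

Definition edges_through (n : nat) (E : {set {set 'I_n}}) (S : {set 'I_n}) : {set {set 'I_n}} :=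
  [set e in E | S \subset e].

Definition codegree (n : nat) (E : {set {set 'I_n}}) (S : {set 'I_n}) : nat :=
  #|edges_through E S|.

Definition shadow (n r : nat) (E : {set {set 'I_n}}) : {set {set 'I_n}} :=
  [set S : {set 'I_n} | (#|S| == r.-1) && (0 < codegree E S)].

Definition shadow_codegree_ge (n r D : nat) (E : {set {set 'I_n}}) : Prop :=
  forall S, S \in shadow r E -> D <= codegree E S.

Definition extensions (n r : nat) (E : {set {set 'I_n}}) (y : seq 'I_n) (m : nat) :
    {set m.-tuple 'I_n} :=
  [set t : m.-tuple 'I_n | tight r E (y ++ t)].

Section Pruning.
Variables (n r : nat).
Implicit Types (E : {set {set 'I_n}}) (S : {set 'I_n}).

Lemma codegree_subset E1 E2 S : E1 \subset E2 -> codegree E1 S <= codegree E2 S.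
Proof.
move=> sub_E; apply/subset_leq_card/subsetP => e; rewrite !inE => /andP[e_E1 ->].
by rewrite (subsetP sub_E).
Qed.

Lemma shadow_delete_through E S : S \in shadow r E ->
  shadow r (E :\: edges_through E S) \proper shadow r E.
Proof.
move=> S_shadow; apply/properP; split.
  apply/subsetP => S'; rewrite !inE => /andP[-> /leq_trans]; apply.
  exact/codegree_subset/subsetDl.
exists S => //; rewrite inE negb_and -leqNgt leqn0 orbC /codegree cards_eq0; apply/orP; left.
by apply/eqP/setP => e; rewrite !inE; case: (e \in E); case: (S \subset e).
Qed.

(* Repeatedly delete all edges through an [(r-1)]-set of positive codegree less
   than [D]; each deletion removes fewer than [D] edges and shrinks the shadow. *)
Lemma prune_low_codegree D E : exists E',
  [/\ E' \subset E, shadow_codegree_ge r D E' & #|E :\: E'| <= D.-1 * #|shadow r E|].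
Proof.
elim: {E}#|shadow r E|.+1 {-2}E (ltnSn #|shadow r E|) => // N IHN E lt_EN.
have [S /andP[S_shadow low_S] | all_high] :=
  pickP (fun S => (S \in shadow r E) && (codegree E S < D)); last first.
  exists E; split; [exact: subxx | | by rewrite setDv cards0].
  by move=> S S_shadow; have := all_high S; rewrite S_shadow /= => /negbT; rewrite -leqNgt.
set E1 := E :\: edges_through E S.
have lt_shadow : #|shadow r E1| < #|shadow r E| by apply/proper_card/shadow_delete_through.
have [E' [sub_E' high_E' card_E']] := IHN E1 (leq_trans lt_shadow lt_EN).
exists E'; split => //; first exact: subset_trans sub_E' (subsetDl _ _).
have sub_diff : E :\: E' \subset edges_through E S :|: (E1 :\: E').
  by apply/subsetP => e; rewrite !inE; case: (e \in E); case: (S \subset e); case: (e \in E').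
apply: leq_trans (subset_leq_card sub_diff) _; rewrite (leq_trans (leq_card_setU _ _)) //.
have le_through : codegree E S <= D.-1 by lia.
apply: leq_trans (leq_add le_through card_E') _.
by rewrite -mulnS leq_mul2l lt_shadow orbT.
Qed.

Lemma card_shadow_le E : #|shadow r E| <= 'C(n, r.-1).
Proof.
rewrite -[n in 'C(n, _)]card_ord -card_draws; apply/subset_leq_card/subsetP => S.
by rewrite !inE => /andP[].
Qed.

End Pruning.

Lemma subset_card_succ (T : finType) (S e : {set T}) : S \subset e -> #|e| = #|S|.+1 ->
  exists v, e = v |: S.
Proof.
move=> sub_Se card_e.
have /cards1P[v diff_v] : #|e :\: S| == 1 by rewrite cardsD (setIidPr sub_Se) card_e subSnn.
exists v; apply/setP => z; rewrite !inE.
have [z_S | z_nS] := boolP (z \in S); first by rewrite orbT (subsetP sub_Se).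
rewrite orbF; apply/idP/eqP => [z_e | ->].
- by apply/set1P; rewrite -diff_v inE z_nS.
- by have := set11 v; rewrite -diff_v inE => /andP[].
Qed.

Section Extensions.
Variables (n r D : nat) (E : {set {set 'I_n}}).
Hypotheses (r_gt0 : 0 < r) (rgraph_E : is_rgraph r E) (high_E : shadow_codegree_ge r D E).

Lemma tight_short (s : seq 'I_n) : size s < r -> tight r E s.
Proof. by move=> short_s; apply/tightP => p; lia. Qed.

Lemma tight_rcons_cat (y t : seq 'I_n) v : size y = r.-1 ->
  [set:: rcons y v : seq 'I_n] \in E -> tight r E (behead (rcons y v) ++ t) ->
  tight r E (y ++ v :: t).
Proof.
move=> size_y edge_yv tight_t.
have split_yv : rcons y v = head v y :: behead (rcons y v) by case: (y).
rewrite -cat_rcons split_yv cat_cons tight_cons tight_t andbT; apply/implyP => _.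
by rewrite -cat_cons -split_yv takel_cat ?take_oversize // size_rcons size_y prednK.
Qed.

Lemma codegree_le_card_link (S : {set 'I_n}) : #|S| = r.-1 ->
  codegree E S <= #|[set v | v |: S \in E]|.
Proof.
move=> card_S; apply: leq_trans (leq_imset_card (fun v => v |: S) _).
apply/subset_leq_card/subsetP => e; rewrite inE => /andP[e_E sub_Se].
have [v e_v] : exists v, e = v |: S.
  by apply: subset_card_succ; rewrite // rgraph_E // card_S prednK.
by rewrite e_v; apply: imset_f; rewrite inE -e_v.
Qed.

Lemma shadow_shift (y : seq 'I_n) v : size y = r.-1 -> v |: [set:: y] \in E ->
  [set:: rcons y v : seq 'I_n] \in E /\ [set:: behead (rcons y v)] \in shadow r E.
Proof.
move=> size_y edge_yv.
have set_yv : [set:: rcons y v : seq 'I_n] = v |: [set:: y].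
  by apply/setP => z; rewrite !inE mem_rcons inE.
have uniq_yv : uniq (rcons y v).
  by apply/card_uniqP; rewrite -cardsE set_yv rgraph_E // size_rcons size_y prednK.
split; first by rewrite set_yv.
rewrite inE cardsE (card_uniqP _); last by case: (rcons y v) uniq_yv => //= x s /andP[].
rewrite size_behead size_rcons size_y eqxx /=.
apply/card_gt0P; exists (v |: [set:: y]); rewrite inE edge_yv -set_yv /=.
by apply/subsetP => z; rewrite !inE => /mem_behead.
Qed.

Lemma state_at_shadow x y m w i : walk r E x y m w -> i < m ->
  [set:: state_at r w i] \in shadow r E.
Proof.
case=> /tightP tight_w size_w _ _ lt_im.
have edge_i := tight_w i; set e := take r (drop i w) in edge_i.
have size_e : size e = r by rewrite size_take_min size_drop size_w; lia.
have uniq_e : uniq e.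
  by apply/card_uniqP; rewrite -cardsE size_e rgraph_E //; apply: edge_i; lia.
have state_e : state_at r w i = take r.-1 e by rewrite /state_at /e take_takel ?leq_pred.
rewrite inE cardsE state_e (card_uniqP (take_uniq _ uniq_e)) size_takel ?size_e ?leq_pred //.
rewrite eqxx /=; apply/card_gt0P; exists [set:: e]; rewrite inE edge_i; last by lia.
by apply/subsetP => z; rewrite !inE => /mem_take.
Qed.

Lemma card_extensions m (y : seq 'I_n) : size y = r.-1 -> [set:: y] \in shadow r E ->
  D ^ m <= #|extensions r E y m|.
Proof.
elim: m y => [|m IHm] y size_y y_shadow.
  rewrite expn0 card_gt0; apply/set0Pn; exists [tuple]; rewrite inE cats0.
  by apply: tight_short; rewrite size_y prednK.
set A := extensions r E y m.+1.
set V := [set v | v |: [set:: y] \in E].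
have le_DV : D <= #|V|.
  apply: leq_trans (high_E y_shadow) (codegree_le_card_link _).
  by move: y_shadow; rewrite inE => /andP[/eqP].
have fiber_ge v : v \in V -> D ^ m <= #|[set t in A | thead t == v]|.
  rewrite inE => edge_yv; have [edge_rcons shifted] := shadow_shift size_y edge_yv.
  have size_shifted : size (behead (rcons y v)) = r.-1 by rewrite size_behead size_rcons.
  apply: leq_trans (IHm _ size_shifted shifted) _.
  have cons_inj : injective (fun t : m.-tuple 'I_n => [tuple of v :: t]).
    by move=> t1 t2 /(congr1 val) [] /val_inj.
  rewrite -(card_imset _ cons_inj); apply/subset_leq_card/subsetP => _ /imsetP[t t_ext ->].
  rewrite !inE theadE eqxx andbT; apply: tight_rcons_cat => //.
  by move: t_ext; rewrite inE.
have card_A : #|A| = \sum_v #|[set t in A | thead t == v]|.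
  rewrite -sum1_card (partition_big (fun t => thead t) predT) //=; apply: eq_bigr => v _.
  by rewrite -sum1_card; apply: eq_bigl => t; rewrite inE.
rewrite expnS card_A (bigID (mem V)) /=; apply: leq_trans (leq_addr _ _).
apply: leq_trans (leq_mul le_DV (leqnn _)) _; rewrite -sum_nat_const.
exact: leq_sum.
Qed.

End Extensions.

Lemma card_bigcup_disjoint (T : finType) M (F : nat -> {set T}) :
  (forall a b, a < b < M -> [disjoint F a & F b]) ->
  #|\bigcup_(a < M) F a| = \sum_(a < M) #|F a|.
Proof.
elim: M => [|M IHM] disj_F; first by rewrite !big_ord0 cards0.
rewrite !big_ord_recr /= cardsU IHM => [|a b /andP[lt_ab lt_bM]]; last first.
  by apply: disj_F; rewrite lt_ab ltnW.
suff /disjoint_setI0 -> : [disjoint \bigcup_(a < M) F a & F M] by rewrite cards0 subn0.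
rewrite -setI_eq0 big_distrl /= -subset0; apply/bigcupsP => a _.
by rewrite subset0 setI_eq0 disj_F // ltn_ord /=.
Qed.

Lemma pigeonhole_sets (T : finType) M (F : nat -> {set T}) :
  #|T| < \sum_(a < M) #|F a| ->
  exists a b t, [/\ a < b < M, t \in F a & t \in F b].
Proof.
have [/existsP[a /existsP[b /andP[lt_ab /set0Pn[t /setIP[t_a t_b]]]]] | disj] :=
  boolP [exists a : 'I_M, exists b : 'I_M, (a < b) && (F a :&: F b != set0)].
  by exists a, b, t; rewrite lt_ab ltn_ord.
rewrite -card_bigcup_disjoint ?ltnNge ?max_card // => a b /andP[lt_ab lt_bM].
rewrite -setI_eq0; apply: contraNT disj => meet.
apply/existsP; exists (Ordinal (ltn_trans lt_ab lt_bM)).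
by apply/existsP; exists (Ordinal lt_bM); rewrite lt_ab.
Qed.

Lemma shortcut_length r l i j : 1 < r -> i < j -> j <= l -> r ^ 2 %| j - i ->
  [/\ 0 < i + r.-1 * r + (l - j), i + r.-1 * r + (l - j) < l &
      i + r.-1 * r + (l - j) = l %[mod r]].
Proof.
move=> r_gt1 lt_ij le_jl /dvdnP[c eq_ji].
have eq_j : j = i + c * r ^ 2 by lia.
have c_gt0 : 0 < c by nia.
have lt_r1r : r.-1 * r < c * r ^ 2 by rewrite expnS expn1 mulnA ltn_mul2r; nia.
have le_r1 : r.-1 <= c * r by nia.
split; [nia | lia |].
have eq_l : l = (c * r - r.-1) * r + (i + r.-1 * r + (l - j)).
  by rewrite mulnBl -mulnA mulnn; lia.
by rewrite [in RHS]eq_l modnMDl.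
Qed.

Lemma many_samples r n D L l : 0 < r -> 0 < D -> L < l ->
  r ^ 2 * n ^ r.-1 <= L * D ^ r.-1 -> n ^ r.-1 < (l.-1 %/ r ^ 2).+1 * D ^ r.-1.
Proof.
move=> r_gt0 D_gt0 lt_Ll D_large.
have r2_gt0 : 0 < r ^ 2 by rewrite expn_gt0 r_gt0.
have le_lM : l <= (l.-1 %/ r ^ 2).+1 * r ^ 2 by have := ltn_ceil l.-1 r2_gt0; lia.
have DP_gt0 : 0 < D ^ r.-1 by rewrite expn_gt0 D_gt0.
rewrite -(ltn_pmul2l r2_gt0); apply: leq_ltn_trans D_large _.
by rewrite mulnA [r ^ 2 * _]mulnC ltn_pmul2r //; lia.
Qed.

(* Sample the states of the walk every [r ^ 2] steps: each sample has at least
   [D ^ r.-1] tight continuations of length [r.-1], and there are more than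
   [n ^ r.-1 / D ^ r.-1] samples, so two samples share a continuation. *)
Lemma closed_walk_shorten n r D L (E : {set {set 'I_n}}) l x s :
  1 < r -> is_rgraph r E -> shadow_codegree_ge r D E ->
  0 < D -> r ^ 2 * n ^ r.-1 <= L * D ^ r.-1 -> L < l -> walk r E x x l s ->
  exists l' s', [/\ 0 < l', l' < l, l' = l %[mod r] & walk r E x x l' s'].
Proof.
move=> r_gt1 rgraph_E high_E D_gt0 D_large lt_Ll walk_s; have r_gt0 : 0 < r by lia.
set M := (l.-1 %/ r ^ 2).+1.
have sample_lt a : a < M -> a * r ^ 2 < l.
  rewrite ltnS => le_a; have := leq_trans (leq_mul le_a (leqnn _)) (leq_divM l.-1 (r ^ 2)).
  by lia.
pose F a := extensions r E (state_at r s (a * r ^ 2)) r.-1.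
have card_F a : a < M -> D ^ r.-1 <= #|F a|.
  move=> lt_aM; case: (walk_s) => _ size_s _ _.
  apply: card_extensions => //; last exact: state_at_shadow walk_s (sample_lt a lt_aM).
  exact: size_state_at size_s (ltnW (sample_lt a lt_aM)).
have many : #|{: r.-1.-tuple 'I_n}| < \sum_(a < M) #|F a|.
  rewrite card_tuple card_ord; apply: leq_trans (many_samples r_gt0 D_gt0 lt_Ll D_large) _.
  rewrite -[M in M * _]card_ord -sum_nat_const.
  by apply: leq_sum => a _; apply: card_F (ltn_ord a).
have [a [b [t [/andP[lt_ab lt_bM] t_a t_b]]]] := pigeonhole_sets many.
rewrite !inE in t_a t_b.
have lt_samples : a * r ^ 2 < b * r ^ 2 by rewrite ltn_mul2r lt_ab expn_gt0 r_gt0.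
have le_bl : b * r ^ 2 <= l by apply/ltnW/sample_lt.
have [s' walk_s'] := closed_walk_shortcut r_gt0 walk_s (ltnW lt_samples) le_bl (size_tuple t) t_a t_b.
have dvd_ab : r ^ 2 %| b * r ^ 2 - a * r ^ 2 by rewrite -mulnBl dvdn_mull.
have [l'_gt0 lt_l' mod_l'] := shortcut_length r_gt1 lt_samples le_bl dvd_ab.
by exists (a * r ^ 2 + r.-1 * r + (l - b * r ^ 2)), s'.
Qed.

Lemma leq_expn4_double r : 1 < r -> r ^ 4 <= (2 * r) ^ r.
Proof.
move=> r_gt1; have [le_r3 | lt_3r] := leqP r 3.
  by case: r r_gt1 le_r3 => [|[|[|[|]]]].
apply: leq_trans (leq_pexp2l _ lt_3r) _; first by lia.
by rewrite leq_exp2r ?leq_pmull //; lia.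
Qed.

Lemma deleted_count_bound r n L d C : 1 < r -> 0 < L ->
  (0 < d -> L * d ^ r.-1 < r ^ 2 * n ^ r.-1) -> C <= n ^ r.-1 ->
  L * (d * C) ^ r <= (2 * r * n ^ r) ^ r.
Proof.
case: r => [|q] //= q_gt0 L_gt0 d_small le_C.
have [-> | d_gt0] := posnP d; first by rewrite mul0n exp0n ?muln0.
have {}d_small := d_small d_gt0.
have lt_d : d < q.+1 ^ 2 * n.
  rewrite -(ltn_exp2r _ _ q_gt0).
  apply: leq_ltn_trans (leq_pmull _ L_gt0) (leq_trans d_small _).
  by rewrite expnMn leq_mul2r -{1}(expn1 (q.+1 ^ 2)) leq_pexp2l ?orbT.
have le_Cq : C ^ q.+1 <= (n ^ q) ^ q.+1 by rewrite leq_exp2r.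
have -> : L * (d * C) ^ q.+1 = L * d ^ q * d * C ^ q.+1 by rewrite expnMn expnSr !mulnA.
apply: leq_trans (leq_mul (leq_mul (ltnW d_small) (ltnW lt_d)) le_Cq) _.
rewrite mulnACA -expnD -expnSr -mulnA -!expnM -expnD -mulSn expnM expnMn.
by rewrite leq_mul2r leq_expn4_double ?orbT.
Qed.

Lemma bin_le_expn n k : 'C(n, k) <= n ^ k.
Proof.
apply: (@leq_trans ('C(n, k) * k`!)); first by rewrite leq_pmulr ?fact_gt0.
rewrite bin_ffact ffact_prod -[k in n ^ k]card_ord -prod_nat_const.
by apply: leq_prod => i _; apply: leq_subr.
Qed.

Lemma codegree_threshold r n L : 1 < r -> 0 < L -> exists D,
  [/\ 0 < D, r ^ 2 * n ^ r.-1 <= L * D ^ r.-1 &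
      0 < D.-1 -> L * D.-1 ^ r.-1 < r ^ 2 * n ^ r.-1].
Proof.
move=> r_gt1 L_gt0.
have witness : exists D, (0 < D) && (r ^ 2 * n ^ r.-1 <= L * D ^ r.-1).
  set N := r ^ 2 * n ^ r.-1.
  have le_pow : N.+1 <= N.+1 ^ r.-1 by rewrite -{1}(expn1 N.+1) leq_pexp2l //; lia.
  by exists N.+1; exact: leq_trans (leqnSn N) (leq_trans le_pow (leq_pmull _ L_gt0)).
have [D /andP[D_gt0 D_large] D_min] := ex_minnP witness.
exists D; split => // D1_gt0; rewrite ltnNge; apply/negP => D1_large.
by have := D_min D.-1; rewrite D1_gt0 D1_large => /(_ isT); lia.
Qed.

Lemma INR_muln a b : INR (a * b) = (INR a * INR b)%R.
Proof. exact: mult_INR. Qed.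

Lemma INR_expn a k : INR (a ^ k) = (INR a ^ k)%R.
Proof. by elim: k => // k IHk; rewrite expnS INR_muln IHk. Qed.

Lemma pow_lt_compat (y x : R) k : (0 <= y < x)%R -> 0 < k -> (y ^ k < x ^ k)%R.
Proof.
move=> lt_yx; case: k => // k _; elim: k => [|k IHk]; first by rewrite !pow_1; lra.
rewrite -[(y ^ _)%R]tech_pow_Rmult -[(x ^ _)%R]tech_pow_Rmult.
by apply: Rmult_le_0_lt_compat => //; [lra | apply: pow_le; lra | lra].
Qed.

Lemma INR_le_Rpower_root r L x N : 0 < r -> 0 < L -> L * x ^ r <= N ^ r ->
  (INR x <= INR N * Rpower (INR L) (- (1 / INR r)))%R.
Proof.
move=> r_gt0 L_gt0 /leP/le_INR; rewrite INR_muln !INR_expn => le_xN.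
set a := Rpower (INR L) (- (1 / INR r)).
have L_pos : (0 < INR L)%R by apply/lt_0_INR/ltP.
have r_neq0 : INR r <> 0%R by apply: not_0_INR; lia.
have aL : (a ^ r * INR L = 1)%R.
  rewrite /a -Rpower_pow; last exact: exp_pos.
  rewrite Rpower_mult.
  have -> : (- (1 / INR r) * INR r = - 1)%R by field.
  by rewrite Rpower_Ropp Rpower_1 // Rinv_l //; lra.
apply: Rnot_lt_le => lt_Nx.
have Na_ge0 : (0 <= INR N * a)%R.
  by apply: Rmult_le_pos; [exact: pos_INR | exact/Rlt_le/exp_pos].
have := pow_lt_compat (conj Na_ge0 lt_Nx) r_gt0; rewrite Rpow_mult_distr => lt_pow.
have := Rmult_lt_compat_r _ _ _ L_pos lt_pow; rewrite Rmult_assoc aL; lra.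
Qed.

Lemma INR_le_deletion_bound r n L x : 0 < r -> 0 < L -> L * x ^ r <= (2 * r * n ^ r) ^ r ->
  (INR x <= 2 * INR r * Rpower (INR L) (- (1 / INR r)) * INR n ^ r)%R.
Proof.
move=> r_gt0 L_gt0 /(INR_le_Rpower_root r_gt0 L_gt0).
by rewrite !INR_muln INR_expn /=; lra.
Qed.

(* When [r] divides [L], winding [L / r] times around a single edge is a
   homomorphic image of the tight cycle of length [L]. *)
Lemma edgeless_of_cycle_hom_free_dvd n r L (E : {set {set 'I_n}}) :
  0 < r -> r < L -> r %| L -> is_rgraph r E -> cycle_hom_free r L E -> E = set0.
Proof.
move=> r_gt0 r_lt_L dvd_rL rgraph_E hom_free; apply/setP => e; rewrite inE.
apply/negP => e_E; have card_e := rgraph_E e e_E.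
have [v0 _] : exists v, v \in e by apply/set0Pn; rewrite -card_gt0 card_e.
have size_e : size (enum e) = r by rewrite -cardE.
have edge_e : [set:: enum e] \in E by rewrite set_enum.
have [s walk_s] := closed_walk_padn r_gt0 (L %/ r).-1
  (closed_walk_around_edge r_gt0 size_e edge_e) r_gt0.
have Lr_gt0 : 0 < L %/ r by rewrite divn_gt0 // ltnW.
rewrite -mulSn prednK // divnK // in walk_s.
by apply: hom_free; exact: ex_intro _ _ (cycle_hom_of_closed_walk r_gt0 v0 (ltnW r_lt_L) walk_s).
Qed.

(* Strong induction on the length: closed walks longer than [L] are shortened
   modulo [r]; shorter ones are padded up to length [L], which is impossible. *)
Lemma no_closed_walk_mod n r D L (E E' : {set {set 'I_n}}) (v0 : 'I_n) :
  1 < r -> r < L -> is_rgraph r E -> cycle_hom_free r L E ->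
  E' \subset E -> shadow_codegree_ge r D E' -> 0 < D -> r ^ 2 * n ^ r.-1 <= L * D ^ r.-1 ->
  forall l x s, 0 < l -> l = L %[mod r] -> ~ walk r E' x x l s.
Proof.
move=> r_gt1 r_lt_L rgraph_E hom_free sub_E' high_E' D_gt0 D_large.
have r_gt0 : 0 < r by lia.
have rgraph_E' : is_rgraph r E' by move=> e /(subsetP sub_E'); apply: rgraph_E.
elim/ltn_ind => l IHl x s l_gt0 mod_l walk_s.
have [le_lL | lt_Ll] := leqP l L.
  have dvd_r : r %| L - l by rewrite -eqn_mod_dvd // mod_l.
  have [s' walk_s'] := closed_walk_padn r_gt0 ((L - l) %/ r) walk_s l_gt0.
  rewrite divnK // subnKC // in walk_s'.
  apply: hom_free; exact: ex_intro _ _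
    (cycle_hom_of_closed_walk r_gt0 v0 (ltnW r_lt_L) (walk_subset sub_E' walk_s')).
have [l' [s' [l'_gt0 lt_l'l mod_l' walk_s']]] :=
  closed_walk_shorten r_gt1 rgraph_E' high_E' D_gt0 D_large lt_Ll walk_s.
by apply: (IHl l' lt_l'l x s' l'_gt0 _ walk_s'); rewrite mod_l'.
Qed.

Theorem corollary4p2 (r n L : nat) (E : {set {set 'I_n}}) :
  0 < r -> is_rgraph r E -> r < L -> cycle_hom_free r L E ->
  exists E' : {set {set 'I_n}},
    E' \subset E /\
    (INR #|E :\: E'| <= 2 * INR r * Rpower (INR L) (- (1 / INR r)) * INR n ^ r)%R /\
    cycle_class_hom_free r (L %% r) E'.
Proof.
move=> r_gt0 rgraph_E r_lt_L hom_free; have L_gt0 : 0 < L by lia.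
have [dvd_rL | ndvd_rL] := boolP (r %| L).
  have E0 := edgeless_of_cycle_hom_free_dvd r_gt0 r_lt_L dvd_rL rgraph_E hom_free.
  exists E; split; first exact: subxx.
  split; last by move=> l lt_rl _ [f /(_ 0 (ltn_trans r_gt0 lt_rl))]; rewrite E0 inE.
  by rewrite setDv cards0; apply: INR_le_deletion_bound; rewrite // exp0n ?muln0.
have r_gt1 : 1 < r.
  by rewrite ltn_neqAle r_gt0 andbT; apply: contraNneq _ ndvd_rL => <-; rewrite dvd1n.
have [D [D_gt0 D_large D_min]] := codegree_threshold n r_gt1 L_gt0.
have [E' [sub_E' high_E' card_E']] := prune_low_codegree r D E.
exists E'; split => //; split.
  have le_card : #|E :\: E'| <= D.-1 * 'C(n, r.-1).
    by apply: leq_trans card_E' _; rewrite leq_mul2l card_shadow_le orbT.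
  apply: Rle_trans (le_INR _ _ (leP le_card)) _; apply: INR_le_deletion_bound => //.
  exact: deleted_count_bound (bin_le_expn n r.-1).
move=> l lt_rl mod_l [f hom_f].
have [s walk_s] := closed_walk_of_cycle_hom r_gt0 (ltn_trans r_gt0 lt_rl) hom_f.
apply: (no_closed_walk_mod (f 0) r_gt1 r_lt_L rgraph_E hom_free sub_E' high_E' D_gt0 D_large
  (ltn_trans r_gt0 lt_rl) _ walk_s).
by rewrite mod_l modn_mod.
Qed.
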